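(* For every Cauchy approximation $x:\mathcal{C}_{{\mathbf{R}_\mathbf{D}}}$ and every $u:{\mathbf{R}_\mathbf{D}}$, we have $\lim(x+u)=\lim(x)+u$, where $x+u$ denotes the Cauchy approximation $\lambda\varepsilon.\,x_\varepsilon+u$.
   Context: Work in univalent type theory with propositional truncation and function extensionality; $\Omega$ is the type of propositions, $\exists$ and $\vee$ are truncated. $\mathbf{Q}$ is the rationals, $\mathbf{Q}_+$ the positive rationals. For predicates $L,U:\mathbf{Q}\to\Omega$ and $x=(L,U)$ write $q<x$ for $L(q)$ and $x<r$ for $U(r)$. $x$ is a Dedekind cut if: (inhabited) $\exists q.\,q<x$ and $\exists r.\,x<r$; (rounded) $q<x\Leftrightarrow\exists q'.(q<q')\wedge(q'<x)$ and $x<r\Leftrightarrow\exists r'.(r'<r)\wedge(x<r')$; (transitive) $(q<x)\wedge(x<r)\Rightarrow q<r$; (located) $q<r\Rightarrow(q<x)\vee(x<r)$. ${\mathbf{R}_\mathbf{D}}$ is the type of Dedekind cuts. Define: $q<\mathsf{rat}(r):=q<r$, $\mathsf{rat}(q)<r:=q<r$; $q<x+y:=\exists s,t.(q=s+t)\wedge(s<x)\wedge(t<y)$, $x+y<r:=\exists s,t.(r=s+t)\wedge(x<s)\wedge(y<t)$; $q<-x:=x<-q$, $-x<r:=-r<x$; $x-y:=x+(-y)$; $q<|x|:=(q<x)\vee(q<-x)$, $|x|<r:=(x<r)\wedge(-x<r)$; premetric $x\sim_\varepsilon y:=|x-y|<\varepsilon$ (i.e. $\varepsilon$ lies in the upper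 cut of $|x-y|$). A Cauchy approximation in ${\mathbf{R}_\mathbf{D}}$ is $x:\mathbf{Q}_+\to{\mathbf{R}_\mathbf{D}}$ with $\forall\delta,\varepsilon.\,x_\delta\sim_{\delta+\varepsilon}x_\varepsilon$; $\mathcal{C}_{{\mathbf{R}_\mathbf{D}}}$ is their type. For $x:\mathcal{C}_{{\mathbf{R}_\mathbf{D}}}$, $\lim(x)$ is the Dedekind cut with $q<\lim(x):=\exists(\varepsilon,\theta:\mathbf{Q}_+).\,q+\varepsilon+\theta<x_\varepsilon$ and $\lim(x)<r:=\exists(\varepsilon,\theta:\mathbf{Q}_+).\,x_\varepsilon<r-\varepsilon-\theta$. *)

From mathcomp Require Import all_boot all_order all_algebra.
Set Implicit Arguments. Unset Strict Implicit. Unset Printing Implicit Defensive.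
Import Order.TTheory GRing.Theory Num.Theory.
Local Open Scope ring_scope.

Definition Qpos := {e : rat | 0 < e}.
Definition qv (e : Qpos) : rat := sval e.

Definition pcut := ((rat -> Prop) * (rat -> Prop))%type.
Definition lower (x : pcut) (q : rat) : Prop := x.1 q.   (* q < x *)
Definition upper (x : pcut) (r : rat) : Prop := x.2 r.   (* x < r *)

Definition is_cut (x : pcut) : Prop :=
  ((exists q, lower x q) /\ (exists r, upper x r)) /\
  (forall q, lower x q <-> exists q', q < q' /\ lower x q') /\
  (forall r, upper x r <-> exists r', r' < r /\ upper x r') /\
  (forall q r, lower x q -> upper x r -> q < r) /\
  (forall q r, q < r -> lower x q \/ upper x r).

Definition RD := {x : pcut | is_cut x}.

Definition ratc (r : rat) : pcut := (fun q => is_true (q < r), fun q => is_true (r < q)).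

Definition addc (x y : pcut) : pcut :=
  (fun q => exists s t, q = s + t /\ lower x s /\ lower y t,
   fun r => exists s t, r = s + t /\ upper x s /\ upper y t).

Definition oppc (x : pcut) : pcut :=
  (fun q => upper x (- q), fun r => lower x (- r)).

Definition subc (x y : pcut) : pcut := addc x (oppc y).

Definition absc (x : pcut) : pcut :=
  (fun q => lower x q \/ lower (oppc x) q,
   fun r => upper x r /\ upper (oppc x) r).

Definition closec (eps : rat) (x y : pcut) : Prop := upper (absc (subc x y)) eps.

Definition is_cauchy (x : Qpos -> pcut) : Prop :=
  (forall e, is_cut (x e)) /\
  (forall d e : Qpos, closec (qv d + qv e) (x d) (x e)).

Definition limc (x : Qpos -> pcut) : pcut :=
  (fun q => exists e th : Qpos, lower (x e) (q + qv e + qv th),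
   fun r => exists e th : Qpos, upper (x e) (r - qv e - qv th)).

(* Both sides are defined by existential formulas over rationals, and they
   match after reindexing: a witness [q + e + th = s + t] with [s < x_e] on
   the left corresponds to [q = (s - e - th) + t] with [s - e - th < lim x]
   on the right (and dually for upper cuts).  The identity is therefore
   formal: it holds for arbitrary pairs of predicates. *)
From mathcomp Require Import all_boot all_order all_algebra.
From mathcomp Require Import ring.
From Stdlib Require Import FunctionalExtensionality PropExtensionality.
Import GRing.Theory.
Local Open Scope ring_scope.

Lemma pcut_ext (x y : pcut) :
  (forall q, lower x q <-> lower y q) -> (forall r, upper x r <-> upper y r) ->
  x = y.
Proof.
case: x y => [L U] [L' U'] eqL eqU; congr pair.
- by apply: functional_extensionality => q; apply: propositional_extensionality.
- by apply: functional_extensionality => r; apply: propositional_extensionality.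
Qed.

Lemma ex_sum_shift (P Q : rat -> Prop) (q c : rat) :
  (exists s t, q + c = s + t /\ P s /\ Q t) <->
  (exists s t, q = s + t /\ P (s + c) /\ Q t).
Proof.
split=> [[s [t [qcE [Ps Qt]]]] | [s [t [qE [Psc Qt]]]]].
- exists (s - c), t; rewrite subrK; split=> //.
  by apply: (addIr c); rewrite qcE; ring.
- by exists (s + c), t; rewrite qE; split=> //; ring.
Qed.

Section LimitOfShiftedSum.

Variables (x : Qpos -> pcut) (u : pcut).

Lemma lower_limc_addc (q : rat) :
  lower (limc (fun e => addc (x e) u)) q <-> lower (addc (limc x) u) q.
Proof.
split=> [[e [th]] | [s [t [qE [[e [th xs]] ut]]]]].
- rewrite /lower /= -!addrA => /ex_sum_shift [s [t [qE [xs ut]]]].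
  by exists s, t; split=> //; split=> //; exists e, th; rewrite -addrA.
- exists e, th; rewrite /lower /= -!addrA; apply/ex_sum_shift.
  by exists s, t; rewrite addrA.
Qed.

Lemma upper_limc_addc (r : rat) :
  upper (limc (fun e => addc (x e) u)) r <-> upper (addc (limc x) u) r.
Proof.
have shiftE (s : rat) (e th : Qpos) : s - qv e - qv th = s + - (qv e + qv th).
  by rewrite opprD addrA.
split=> [[e [th]] | [s [t [rE [[e [th xs]] ut]]]]].
- rewrite /upper /= shiftE => /ex_sum_shift [s [t [rE [xs ut]]]].
  by exists s, t; split=> //; split=> //; exists e, th; rewrite shiftE.
- exists e, th; rewrite /upper /= shiftE; apply/ex_sum_shift.
  by exists s, t; rewrite -shiftE.
Qed.

End LimitOfShiftedSum.

Theorem lemma2p24 (x : Qpos -> pcut) (u : pcut) :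
  is_cauchy x -> is_cut u ->
  limc (fun e => addc (x e) u) = addc (limc x) u.
Proof.
move=> _ _; apply: pcut_ext.
- exact: lower_limc_addc.
- exact: upper_limc_addc.
Qed.
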